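(* Let $N\ge1$ and suppose the parameter space $\Theta$ of the correlated Bernoulli random graph model satisfies: (a) $\Theta$ is nondegenerate; (b) edge correlations are component-uniform, i.e. there is a function $\varrho_E:\Theta\to\mathbb{R}$ such that for all $\theta\in\Theta$ and all $i=1,\dots,N$, $\varrho_i(\theta)=\varrho_E(\theta)$; (c) $\Theta\not\subseteq\mathcal{R}^o$, i.e. there exists $\theta\in\Theta$ with $\varrho_E(\theta)\neq0$. Then there does not exist an unbiased estimator of $\varrho_E$, i.e. no statistic $S:\mathcal{X}\to\mathbb{R}$ satisfies $\mathbb{E}_\theta(S)=\varrho_E(\theta)$ for all $\theta\in\Theta$.
   Context: Correlated Bernoulli random graph model: fix a positive integer $N$ and let $\mathcal{R}=\{(p_1,\dots,p_N,\varrho_1,\dots,\varrho_N): p_i,\varrho_i\in[0,1]\}$; a parameter space is any $\Theta\subseteq\mathcal{R}$, and $\varrho_i(\theta)$ denotes the $(N+i)$th coordinate of $\theta$. For $\theta\in\Theta$, the pairs $(X_i,Y_i)$, $i=1,\dots,N$, of $\{0,1\}$-valued random variables are independent, $X_i,Y_i$ are marginally Bernoulli$(p_i)$ with Pearson correlation $\varrho_i$ (so $\mathbb{P}(X_i=Y_i=1)=p_i^2+\varrho_ip_i(1-p_i)$, $\mathbb{P}(X_i=Y_i=0)=(1-p_i)^2+\varrho_ip_i(1-p_i)$, $\mathbb{P}(X_i=1,Y_i=0)=\mathbb{P}(X_i=0,Y_i=1)=(1-\varrho_i)p_i(1-p_i)$). Sample space $\mathcal{X}=\{(x,y):x,y\in\{0,1\}^N\}$.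 Let $\mathcal{R}^o=\{(p_1,\dots,p_N,0,\dots,0):p_i\in\mathbb{R}\}$; $\Theta$ is nondegenerate if $\Theta\cap\mathcal{R}^o$ has an interior point relative to $\mathcal{R}^o$, i.e. there exist $z\in\Theta\cap\mathcal{R}^o$ and $\epsilon>0$ such that every point of $\mathcal{R}^o$ within distance $\epsilon$ of $z$ lies in $\Theta$. *)

(* over an abstract R : rcfType (real closed field; the reals
   are an instance). *)
From mathcomp Require Import all_boot all_order all_algebra.
Set Implicit Arguments. Unset Strict Implicit. Unset Printing Implicit Defensive.
Import Order.TTheory GRing.Theory Num.Theory.
Local Open Scope ring_scope.

(* A parameter theta = (p_1..p_N, rho_1..rho_N) is a pair of functions. *)
Definition param (R : Type) (N : nat) : Type := (('I_N -> R) * ('I_N -> R))%type.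

Definition in_calR (R : realDomainType) N (th : param R N) : Prop :=
  forall i, (0 <= th.1 i <= 1) /\ (0 <= th.2 i <= 1).

Definition in_calRo (R : realDomainType) N (th : param R N) : Prop :=
  forall i, th.2 i = 0.

Definition pdist (R : rcfType) N (a b : param R N) : R :=
  Num.sqrt (\sum_(i < N) ((a.1 i - b.1 i) ^+ 2 + (a.2 i - b.2 i) ^+ 2)).

Definition param_nondegenerate (R : rcfType) N (Theta : param R N -> Prop) : Prop :=
  exists z : param R N, Theta z /\ in_calRo z /\
    exists eps : R, 0 < eps /\
      forall w : param R N, in_calRo w -> pdist w z < eps -> Theta w.

(* joint law of one pair (X_i, Y_i) *)
Definition pairprob (R : ringType) (p rho : R) (a b : bool) : R :=
  match a, b with
  | true, true => p ^+ 2 + rho * p * (1 - p)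
  | false, false => (1 - p) ^+ 2 + rho * p * (1 - p)
  | _, _ => (1 - rho) * p * (1 - p)
  end.

Definition sample (N : nat) : finType :=
  ({ffun 'I_N -> bool} * {ffun 'I_N -> bool})%type.

Definition prob (R : comRingType) N (th : param R N) (s : sample N) : R :=
  \prod_(i < N) pairprob (th.1 i) (th.2 i) (s.1 i) (s.2 i).

Definition expect (R : comRingType) N (th : param R N) (S : sample N -> R) : R :=
  \sum_(s : sample N) S s * prob th s.

From mathcomp Require Import all_boot all_order all_algebra ring lra.
Set Implicit Arguments. Unset Strict Implicit. Unset Printing Implicit Defensive.
Import Order.TTheory GRing.Theory Num.Theory.
Local Open Scope ring_scope.

(* Freeze every coordinate of the parameter except the k-th.  Then E_theta S is
   sum_(u,v) W_uv P_(p,rho)(X_k = u, Y_k = v) with weights W independent of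
   (p, rho) = (p_k, rho_k).  For rho = 0 this is the polynomial
   W_11 p^2 + W_00 (1-p)^2 + (W_10 + W_01) p (1-p) of degree at most 2, so if it
   vanishes at three distinct p then W_11 = W_00 = W_10 + W_01 = 0, and then the
   expectation vanishes for every (p, rho) as well.  An unbiased estimator of
   rho_E has expectation 0 on a 3^N grid of points of R^o near the interior point
   of Theta; freeing the coordinates one at a time gives E_theta S = 0 for every
   theta, contradicting rho_E(theta) <> 0. *)

Lemma quadratic_coef_eq0 (R : idomainType) (a b c : R) (rs : seq R) :
  uniq rs -> (3 <= size rs)%N ->
  (forall x, x \in rs -> a + b * x + c * x ^+ 2 = 0) ->
  [/\ a = 0, b = 0 & c = 0].
Proof.
move=> rs_uniq rs_size rs_roots.
have q0 : Poly [:: a; b; c] = 0.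
  apply: (roots_geq_poly_eq0 (rs := rs)) => //; last first.
    exact: leq_trans (size_Poly [:: a; b; c]) rs_size.
  apply/allP => x /rs_roots x_root.
  by rewrite /root horner_Poly /=; apply/eqP; rewrite -[RHS]x_root; ring.
have coef_eq0 i : [:: a; b; c]`_i = 0 by rewrite -coef_Poly q0 coef0.
by split; [exact: (coef_eq0 0) | exact: (coef_eq0 1) | exact: (coef_eq0 2)].
Qed.

Lemma pair_functional_eq0 (R : idomainType) (W : bool -> bool -> R) (rs : seq R) :
  uniq rs -> (3 <= size rs)%N ->
  (forall x, x \in rs -> \sum_u \sum_v W u v * pairprob x 0 u v = 0) ->
  forall p r, \sum_u \sum_v W u v * pairprob p r u v = 0.
Proof.
move=> rs_uniq rs_size W0 p r.
have [Wff Wmix Wtt] : [/\ W false false = 0,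
    W true false + W false true - 2 * W false false = 0 &
    W true true + W false false - (W true false + W false true) = 0].
  apply: quadratic_coef_eq0 rs_uniq rs_size _ => x /W0 <-.
  by rewrite !big_bool /=; ring.
rewrite Wff mulr0 subr0 in Wmix; rewrite Wff Wmix addr0 subr0 in Wtt.
move/eqP: Wmix; rewrite addr_eq0 => /eqP Wft.
by rewrite !big_bool /= Wff Wtt Wft; ring.
Qed.

Section CoordinateUpdate.
Variables (R : comNzRingType) (N : nat).
Implicit Types (th : param R N) (k : 'I_N) (S : sample N -> R).

Definition param_upd th k (p r : R) : param R N :=
  (fun i => if i == k then p else th.1 i, fun i => if i == k then r else th.2 i).

Definition cell_mass th k S (u v : bool) : R :=
  \sum_(s : sample N | (s.1 k == u) && (s.2 k == v))
     S s * \prod_(i | i != k) pairprob (th.1 i) (th.2 i) (s.1 i) (s.2 i).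

Lemma expect_cells th k S :
  expect th S = \sum_u \sum_v cell_mass th k S u v * pairprob (th.1 k) (th.2 k) u v.
Proof.
rewrite /expect (partition_big (fun s : sample N => (s.1 k, s.2 k)) predT) //= pair_bigA.
apply: eq_bigr => -[u v] _; rewrite /cell_mass mulr_suml.
apply: eq_big => [s|s]; first by rewrite xpair_eqE.
rewrite xpair_eqE => /andP[/eqP <- /eqP <-].
by rewrite /prob (bigD1 k) //= mulrA mulrAC.
Qed.

Lemma cell_mass_upd th k S p r u v :
  cell_mass (param_upd th k p r) k S u v = cell_mass th k S u v.
Proof.
apply: eq_bigr => s _; congr (_ * _).
by apply: eq_bigr => i /negbTE /= ->.
Qed.

Lemma expect_upd th k S p r :
  expect (param_upd th k p r) S = \sum_u \sum_v cell_mass th k S u v * pairprob p r u v.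
Proof.
rewrite (expect_cells _ k) /= eqxx.
by apply: eq_bigr => u _; apply: eq_bigr => v _; rewrite cell_mass_upd.
Qed.

End CoordinateUpdate.

Section Grid.
Variables (R : idomainType) (N : nat) (X : 'I_N -> seq R) (S : sample N -> R).
Hypotheses (X_uniq : forall i, uniq (X i)) (X_size : forall i, (3 <= size (X i))%N).

Definition on_grid (th : param R N) := forall i, th.2 i = 0 /\ th.1 i \in X i.

Lemma expect_eq0_of_grid :
  (forall th, on_grid th -> expect th S = 0) -> forall th, expect th S = 0.
Proof.
move=> grid0.
suff grid_from m th : (forall i : 'I_N, (m <= i)%N -> th.2 i = 0 /\ th.1 i \in X i) ->
    expect th S = 0.
  by move=> th; apply: (grid_from N) => i; rewrite leqNgt ltn_ord.
elim: m th => [|m IHm] th th_grid; first by apply: grid0 => i; apply: th_grid.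
have [mN|Nm] := ltnP m N; last first.
  by apply: IHm => i; rewrite leqNgt (leq_trans (ltn_ord i) Nm).
pose k := Ordinal mN.
rewrite (expect_cells _ k); apply: pair_functional_eq0 (X_uniq k) (X_size k) _ _ _.
move=> x xX; rewrite -expect_upd; apply: IHm => i m_le_i /=.
have [-> // | i_neq_k] := eqVneq i k.
apply: th_grid; rewrite ltn_neqAle m_le_i andbT.
by apply: contra_neq i_neq_k => m_eq_i; apply: val_inj.
Qed.

End Grid.

Lemma pdist_lt (R : rcfType) N (w z : param R N) (d eps : R) :
  0 < eps -> N%:R * d < eps ^+ 2 ->
  (forall i, (w.1 i - z.1 i) ^+ 2 + (w.2 i - z.2 i) ^+ 2 <= d) -> pdist w z < eps.
Proof.
move=> eps_gt0 Nd_lt coord_le.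
rewrite /pdist -(ger0_norm (ltW eps_gt0)) -sqrtr_sqr ltr_sqrt ?exprn_gt0 //.
apply: le_lt_trans Nd_lt.
by rewrite mulr_natl -[X in d *+ X]card_ord -sumr_const; apply: ler_sum.
Qed.

Lemma pdist_grid_lt (R : rcfType) N (z : param R N) (eps : R) : 0 < eps ->
  exists2 h : R, 0 < h & forall w : param R N,
    (forall i, w.2 i = z.2 i /\ w.1 i \in [:: z.1 i - h; z.1 i; z.1 i + h]) ->
    pdist w z < eps.
Proof.
move=> eps_gt0; pose h := eps / (N%:R + 1).
have N1_gt0 : 0 < N%:R + 1 :> R by rewrite ltr_wpDl.
have h_gt0 : 0 < h by rewrite divr_gt0.
have eps_h : eps = h * (N%:R + 1) by rewrite divfK // gt_eqF.
exists h => // w w_grid; apply: (pdist_lt (d := h ^+ 2)) => // [|i].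
  by have := ler0n R N; rewrite eps_h; nra.
have [-> ] := w_grid i; rewrite subrr expr0n addr0.
by rewrite !inE => /or3P[] /eqP ->; nra.
Qed.

Theorem theorem6 (R : rcfType) (N : nat) (Theta : param R N -> Prop)
  (rhoE : param R N -> R) :
  (0 < N)%N ->
  (forall th, Theta th -> in_calR th) ->
  param_nondegenerate Theta ->
  (forall th, Theta th -> forall i : 'I_N, th.2 i = rhoE th) ->
  (exists th, Theta th /\ rhoE th <> 0) ->
  ~ (exists S : sample N -> R, forall th, Theta th -> expect th S = rhoE th).
Proof.
move=> N_gt0 _ [z [_ [z_Ro [eps [eps_gt0 ball]]]]] rhoE_coord.
move=> [th1 [Theta_th1 rhoE_th1]] [S unbiased].
have [h h_gt0 near_z] := pdist_grid_lt z eps_gt0.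
pose X i := [:: z.1 i - h; z.1 i; z.1 i + h].
have X_uniq i : uniq (X i).
  by rewrite /= !inE !negb_or andbT -andbA; apply/and3P; split; apply/negP => /eqP; lra.
have grid0 th : on_grid X th -> expect th S = 0.
  move=> th_grid; have th_Ro : in_calRo th by move=> i; case: (th_grid i).
  have Theta_th : Theta th.
    by apply: ball (near_z _ _) => // i; rewrite z_Ro; apply: th_grid.
  by rewrite unbiased // -(rhoE_coord th Theta_th (Ordinal N_gt0)) th_Ro.
by apply: rhoE_th1; rewrite -unbiased // (expect_eq0_of_grid X_uniq _ grid0).
Qed.
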